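(* Assume the refinement setting of the context, and assume $F(u)=u$, $G(u)=u$, $p\cap\overline{q}\subseteq F(p\cup q)$, $p\cap\overline{q}\subseteq\mathrm{grd}(G)$ and $p\cap\overline{q}\subseteq G(q)$. Let $p'=r^{-1}[p]$ and $q'=r^{-1}[q]$. Then $p'\cup q'\subseteq{\cal L}(X'(q'))(q')$, where ${\cal L}(X'(q'))(s)$ denotes the greatest fixpoint of the monotone map $Y\mapsto q'\cup\big(G'(s)\cap F'(Y)\cap H(Y)\big)$ on $\mathbb{P}(v)$ (the liberal set transformer of the concrete fair iteration $X'(q')=\overline{q'}\Longrightarrow(((F'\sqcap H);X'(q'))\mathrel{\triangledown} G')$).
   Context: Refinement setting: $u$ (abstract states) and $v$ (concrete states) are sets; $F,G$ are conjunctive set transformers on $u$ and $F',G',H$ conjunctive set transformers on $v$ (conjunctive = preserves intersections of nonempty families of subsets, hence monotone). $\mathrm{grd}(E)=\overline{E(\varnothing)}$. $r\subseteq v\times u$ is a total relation (every $y\in v$ is related to some $x\in u$). For $a\subseteq v$, $r[a]=\{x\in u\mid\exists y\in a,(y,x)\in r\}$; for $b\subseteq u$, $r^{-1}[b]=\{y\in v\mid\exists x\in b,(y,x)\in r\}$. Complements $\overline{\cdot}$ are taken in $u$ for subsets of $u$ and in $v$ for subsets of $v$. The refinement conditions are: for all $s\subseteq v$, $F(\overline{r[\overline{s}]})\subseteq\overline{r[\overline{F'(s)}]}$, $G(\overline{r[\overline{s}]})\subseteq\overline{r[\overline{G'(s)}]}$, and $\overline{r[\overline{s}]}\subseteq\overline{r[\overline{H(s)}]}$.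 $p,q\subseteq u$. The choice $F'\sqcap H$ is $s\mapsto F'(s)\cap H(s)$. *)

From mathcomp Require Import all_boot.
From mathcomp Require Import boolp classical_sets.
Set Implicit Arguments. Unset Strict Implicit. Unset Printing Implicit Defensive.
Local Open Scope classical_set_scope.

Definition transformer (T : Type) := set T -> set T.

Definition conjunctive (T : Type) (E : transformer T) : Prop :=
  forall S : set (set T), S !=set0 ->
    E (\bigcap_(X in S) X) = \bigcap_(X in S) E X.

Definition grd (T : Type) (E : transformer T) : set T := ~` E set0.

Definition rimg (V U : Type) (r : V -> U -> Prop) (a : set V) : set U :=
  [set x | exists2 y, a y & r y x].
Definition rpre (V U : Type) (r : V -> U -> Prop) (b : set U) : set V :=
  [set y | exists2 x, b x & r y x].

Definition total_rel (V U : Type) (r : V -> U -> Prop) : Prop :=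
  forall y : V, exists x : U, r y x.

(* Greatest fixpoint of a (monotone) map on P(T): union of all post-fixpoints
   (Knaster–Tarski). *)
Definition gfp (T : Type) (f : set T -> set T) : set T :=
  \bigcup_(Y in [set Y | Y `<=` f Y]) Y.

(* Liberal set transformer L(X'(q'))(s) of the concrete fair iteration
   X'(q') = ~q' ==> (((F' ⊓ H); X'(q')) ▽ G'): greatest fixpoint of
   Y |-> q' ∪ (G'(s) ∩ F'(Y) ∩ H(Y)). *)
Definition Lfair (V : Type) (F' G' H : transformer V) (q' s : set V) : set V :=
  gfp (fun Y => q' `|` (G' s `&` F' Y `&` H Y)).

(* The set Y := r^{-1}[p] ∪ r^{-1}[q] is a post-fixpoint of the map whose
   greatest fixpoint is L(X'(q'))(q').  The refinement conditions say that
   preimages under r are carried along: if r^{-1}[b] ⊆ s then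
   r^{-1}[E(b)] ⊆ E'(s).  A point of Y outside q' lies above some x ∈ p ∖ q,
   and the hypotheses on F and G at x transfer to F'(Y) and G'(q'), while H
   preserves r^{-1}[p] ⊆ Y. *)
From mathcomp Require Import all_boot.
From mathcomp Require Import boolp classical_sets.
Set Implicit Arguments. Unset Strict Implicit.
Local Open Scope classical_set_scope.

Lemma conjunctive_mono (T : Type) (E : transformer T) :
  conjunctive E -> {homo E : A B / A `<=` B}.
Proof.
move=> cE A B AB.
set S := [set X | X = A \/ X = B].
have capS : \bigcap_(X in S) X = A.
  by apply/seteqP; split=> [x /(_ A (or_introl erefl))//|x Ax X [->|->]//]; exact: AB.
have := cE S (ex_intro _ A (or_introl erefl)); rewrite capS => ->.
by move=> x /(_ B (or_intror erefl)).
Qed.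

Lemma sub_gfp (T : Type) (f : set T -> set T) (Y : set T) :
  Y `<=` f Y -> Y `<=` gfp f.
Proof. by move=> Yf y Yy; exists Y. Qed.

Section Refinement.
Variables (U V : Type) (r : V -> U -> Prop).

Lemma rpreU (a b : set U) : rpre r (a `|` b) = rpre r a `|` rpre r b.
Proof.
apply/seteqP; split=> [y [x [ax|bx] rxy]|y [[x ax rxy]|[x bx rxy]]].
- by left; exists x.
- by right; exists x.
- by exists x => //; left.
- by exists x => //; right.
Qed.

Lemma sub_rimgCC (b : set U) (s : set V) :
  rpre r b `<=` s -> b `<=` ~` rimg r (~` s).
Proof. by move=> bs x bx [y nsy ryx]; apply: nsy; apply: bs; exists x. Qed.

Lemma rimgCC_rel (s : set V) (x : U) (y : V) :
  (~` rimg r (~` s)) x -> r y x -> s y.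
Proof. by move=> sx ryx; apply: contrapT => nsy; apply: sx; exists y. Qed.

Lemma refines_rpre (E : transformer U) (E' : transformer V) :
  {homo E : A B / A `<=` B} ->
  (forall s, E (~` rimg r (~` s)) `<=` ~` rimg r (~` E' s)) ->
  forall b s, rpre r b `<=` s -> rpre r (E b) `<=` E' s.
Proof.
move=> monoE refE b s bs y [x Ebx ryx].
exact: rimgCC_rel (refE s x (monoE _ _ (sub_rimgCC bs) x Ebx)) ryx.
Qed.

End Refinement.

(* Only the liberal transformer is concerned. *)
Theorem lemma5 (u v : Type) (F G : transformer u) (F' G' H : transformer v)
  (r : v -> u -> Prop) (p q : set u) :
  conjunctive F -> conjunctive G ->
  conjunctive F' -> conjunctive G' -> conjunctive H ->
  total_rel r ->
  (forall s : set v, F (~` rimg r (~` s)) `<=` ~` rimg r (~` F' s)) ->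
  (forall s : set v, G (~` rimg r (~` s)) `<=` ~` rimg r (~` G' s)) ->
  (forall s : set v, ~` rimg r (~` s) `<=` ~` rimg r (~` H s)) ->
  F setT = setT -> G setT = setT ->
  p `&` ~` q `<=` F (p `|` q) ->
  p `&` ~` q `<=` grd G ->
  p `&` ~` q `<=` G q ->
  rpre r p `|` rpre r q `<=` Lfair F' G' H (rpre r q) (rpre r q).
Proof.
move=> cF cG _ _ _ _ refF refG refH _ _ pqF _ pqG.
apply: sub_gfp => y [py|qy]; last by left.
have [qy|nqy] := pselect (rpre r q y); first by left.
right; have [x px ryx] := py.
have pqx : (p `&` ~` q) x by split=> // qx; apply: nqy; exists x.
split; first split.
- by apply: (refines_rpre (conjunctive_mono cG) refG (@subset_refl _ _)); exists x; [exact: pqG|].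
- apply: (refines_rpre (conjunctive_mono cF) refF (b := p `|` q)); first by rewrite rpreU.
  by exists x; [exact: pqF|].
- by apply: (refines_rpre (E := id) (fun _ _ AB => AB) refH (b := p)) => [z pz|]; [left|exists x].
Qed.
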